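(* Let $A$ and $B$ be convex bodies in $\mathbb{R}^2$ and let $A'$ be a vertical stretching of $A$. Let $m=|\pi(A)|$ and $n=|\pi(B)|$ be the lengths of the projections onto the first coordinate. Then $$|A+B|=\left(\frac{|A|}{m}+\frac{|B|}{n}\right)(m+n)$$ if and only if $$|A'+B|=\left(\frac{|A'|}{m}+\frac{|B|}{n}\right)(m+n).$$
   Context: A convex body is a compact convex set with nonempty interior; $|X|$ denotes area; $\pi(x,y)=x$. A convex body $A$ with $\pi(A)=[0,m]$ can be written $A=\{(x,y): x\in[0,m],\ u_A(x)\le y\le v_A(x)\}$ with $u_A$ convex and $v_A$ concave. A vertical stretching of $A$ of amount $h\ge 0$ is the set $\{(x,y): x\in\pi(A),\ u_A(x)\le y\le v_A(x)+h\}$. *)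

From HB Require Import structures.
From mathcomp Require Import all_boot all_order all_algebra.
From mathcomp Require Import all_classical all_reals all_analysis.
Set Implicit Arguments. Unset Strict Implicit. Unset Printing Implicit Defensive.
Import Order.TTheory GRing.Theory Num.Theory.
Import numFieldNormedType.Exports.
Local Open Scope classical_set_scope.
Local Open Scope ring_scope.

Definition convex2 (R : realType) (A : set (R * R)) :=
  forall p q : R * R, forall t : R, A p -> A q -> 0 <= t -> t <= 1 ->
    A ((1 - t) * p.1 + t * q.1, (1 - t) * p.2 + t * q.2).

Definition convex_body (R : realType) (A : set (R * R)) :=
  compact A /\ convex2 A /\ (interior A !=set0).

Definition mink_sum (R : realType) (A B : set (R * R)) : set (R * R) :=
  [set z | exists a b, A a /\ B b /\ z = (a.1 + b.1, a.2 + b.2)].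

Definition area (R : realType) (A : set (R * R)) : R :=
  fine ((@lebesgue_measure R \x @lebesgue_measure R) A)%E.

Definition projlen (R : realType) (A : set (R * R)) : R :=
  fine (@lebesgue_measure R (fst @` A)).

(* Vertical stretching of amount h: over each x in pi(A), the fiber
   [u_A(x), v_A(x)] becomes [u_A(x), v_A(x) + h]. Here u_A(x) <= y <= v_A(x)+h
   is written as: some (x,y1),(x,y2) in A with y1 <= y <= y2 + h. *)
Definition vstretch (R : realType) (A : set (R * R)) (h : R) : set (R * R) :=
  [set p | exists y1 y2, A (p.1, y1) /\ A (p.1, y2) /\ y1 <= p.2 /\ p.2 <= y2 + h].

From HB Require Import structures.
From mathcomp Require Import all_boot all_order all_algebra.
From mathcomp Require Import all_classical all_reals all_analysis.
From mathcomp Require Import measurable_realfun lra ring.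
Import Order.TTheory GRing.Theory Num.Theory.
Import numFieldNormedType.Exports.
Local Open Scope classical_set_scope.
Local Open Scope ring_scope.
Set Implicit Arguments. Unset Strict Implicit. Unset Printing Implicit Defensive.

(* Both sides of each equation are affine in the stretching: |A'| = |A| + h m
   because every vertical fibre over pi(A) grows by h, and A' + B is the
   stretching of A + B by the same h, whose projection has length m + n, so
   |A' + B| = |A + B| + h (m + n).  Both sides thus gain h (m + n). *)

Lemma fst_continuous (T U : topologicalType) : continuous (@fst T U).
Proof. by move=> p; exact: cvg_fst. Qed.

Lemma snd_continuous (T U : topologicalType) : continuous (@snd T U).
Proof. by move=> p; exact: cvg_snd. Qed.

Lemma pairl_continuous (T U : topologicalType) (x : T) :
  continuous (fun y : U => (x, y)).
Proof. by move=> y; apply: cvg_pair; [exact: cvg_cst | exact: cvg_id]. Qed.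

Section Topology.
Variable R : realType.

Definition rat_square (q1 q2 r : rat) : set (R * R) :=
  ball (ratr q1 : R) (ratr r) `*` ball (ratr q2 : R) (ratr r).

Lemma open_rat_square_cover (U : set (R * R)) p : open U -> U p ->
  exists q1 q2 r, rat_square q1 q2 r `<=` U /\ rat_square q1 q2 r p.
Proof.
move=> oU /oU /nbhs_ballP[e /= e0 peU].
have [r] : exists r : rat, (0 : R) < ratr r < e / 2.
  have [r] := @rat_in_itvoo R 0 (e / 2) ltac:(lra).
  by rewrite in_itv /= => ?; exists r.
move=> /andP[r0 re].
have [q1] := @rat_in_itvoo R (p.1 - ratr r) (p.1 + ratr r) ltac:(lra).
have [q2] := @rat_in_itvoo R (p.2 - ratr r) (p.2 + ratr r) ltac:(lra).
rewrite !in_itv /= => /andP[? ?] /andP[? ?].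
exists q1, q2, r; split; last first.
  by split; rewrite /ball /= ltr_distl; apply/andP; split; lra.
move=> z []; rewrite /ball /= !ltr_distl => /andP[? ?] /andP[? ?].
by apply: peU; split; rewrite /ball /= ltr_distl; apply/andP; split; lra.
Qed.

(* The product sigma-algebra contains the open sets of R^2: each one is the
   union of the countably many rational squares it contains. *)
Lemma open_measurableR2 (U : set (R * R)) : open U ->
  measurable (U : set (measurableTypeR R * measurableTypeR R)).
Proof.
move=> oU.
pose F q1 q2 r := [set z | rat_square q1 q2 r `<=` U /\ rat_square q1 q2 r z].
have -> : U = \bigcup_q1 \bigcup_q2 \bigcup_r F q1 q2 r.
  apply/seteqP; split => [p Up|p [q1 _ [q2 _ [r _ [sU /sU//]]]]].
  have [q1 [q2 [r [sU sp]]]] := open_rat_square_cover oU Up.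
  by exists q1 => //; exists q2 => //; exists r.
apply: bigcupT_measurable_rat => q1; apply: bigcupT_measurable_rat => q2.
apply: bigcupT_measurable_rat => r.
have [sU|nsU] := pselect (rat_square q1 q2 r `<=` U).
  rewrite [F _ _ _](_ : _ = rat_square q1 q2 r); last first.
    by apply/seteqP; split => [z []//|z]; split.
  by apply: measurableX; apply: open_measurable; exact: ball_open.
by rewrite [F _ _ _](_ : _ = set0) //; apply/seteqP; split => // z [].
Qed.

Lemma compact_measurableR2 (C : set (R * R)) : compact C ->
  measurable (C : set (measurableTypeR R * measurableTypeR R)).
Proof.
move=> cC; rewrite -(setCK C); apply: measurableC; apply: open_measurableR2.
by apply: closed_openC; apply: compact_closed => //; exact: norm_hausdorff.
Qed.

Lemma compact_fst (C : set (R * R)) : compact C -> compact (fst @` C).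
Proof. by apply: continuous_compact; apply/continuous_subspaceT/fst_continuous. Qed.

Lemma compact_snd (C : set (R * R)) : compact C -> compact (snd @` C).
Proof. by apply: continuous_compact; apply/continuous_subspaceT/snd_continuous. Qed.

Lemma compact_normR_bounded (S : set R) : compact S ->
  exists M, forall y, S y -> `|y| <= M.
Proof.
move=> /compact_bounded[M [_ MS]].
by exists (M + 1) => y Sy; apply: MS => //; rewrite ltrDl.
Qed.

Lemma compact_in_square (C : set (R * R)) : compact C ->
  exists M, forall p, C p -> `|p.1| <= M /\ `|p.2| <= M.
Proof.
move=> cC.
have [M1 HM1] := compact_normR_bounded (compact_fst cC).
have [M2 HM2] := compact_normR_bounded (compact_snd cC).
exists (Num.max M1 M2) => p Cp; rewrite !le_max.
by split; apply/orP; [left; apply: HM1 | right; apply: HM2]; exists p.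
Qed.

(* The endpoints are -sup(-S) and sup S, both attained since S is closed. *)
Lemma closed_bounded_convexR_itv (S : set R) : S !=set0 -> closed S ->
  (exists M, forall y, S y -> `|y| <= M) ->
  (forall y1 y2 y, S y1 -> S y2 -> y1 <= y -> y <= y2 -> S y) ->
  exists a b, a <= b /\ S = `[a, b]%classic.
Proof.
move=> [y0 Sy0] cS [M SM] cvS.
pose S' := [set y | S (- y)].
have ubS : has_ubound S by exists M => y /SM /(le_trans (ler_norm _)).
have ubS' : has_ubound S'.
  by exists M => y /SM; rewrite normrN => /(le_trans (ler_norm _)).
have cS' : closed S'.
  by apply: (preimage_closed (f := -%R)) => // x _; exact: opp_continuous.
have Ssup : S (sup S).
  by move/closure_id: cS => {1}->; apply: closure_sup ubS; exists y0.
have Ssup' : S' (sup S').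
  move/closure_id: cS' => {1}->; apply: closure_sup ubS'.
  by exists (- y0); rewrite /S' /= opprK.
exists (- sup S'), (sup S); split.
  by have := ub_le_sup ubS Ssup'; have := ub_le_sup ubS Ssup; lra.
apply/seteqP; split => y; last first.
  by rewrite /= in_itv /= => /andP[? ?]; exact: (cvS _ _ _ Ssup' Ssup).
move=> Sy; rewrite /= in_itv /= (ub_le_sup ubS) // andbT.
have /(ub_le_sup ubS') : S' (- y) by rewrite /S' /= opprK.
lra.
Qed.

End Topology.

Lemma segment_point (R : realFieldType) (a b y : R) : a < b -> a <= y -> y <= b ->
  exists t, [/\ 0 <= t, t <= 1 & y = (1 - t) * a + t * b].
Proof.
move=> ab ay yb; exists ((y - a) / (b - a)); split.
- by apply: divr_ge0; lra.
- by rewrite ler_pdivrMr ?mul1r; lra.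
- by field; lra.
Qed.

Section ConvexSections.
Variables (R : realType) (C : set (R * R)).
Hypotheses (cC : compact C) (cvC : convex2 C).

Lemma convex2_vsegment x y1 y2 y :
  C (x, y1) -> C (x, y2) -> y1 <= y -> y <= y2 -> C (x, y).
Proof.
move=> C1 C2 y1y yy2; have [e|ne] := eqVneq y1 y2.
  by have -> : y = y1 by apply/eqP; rewrite eq_le y1y e yy2.
have lt12 : y1 < y2 by rewrite lt_neqAle ne (le_trans y1y yy2).
have [t [t0 t1 ->]] := segment_point lt12 y1y yy2.
by have := cvC C1 C2 t0 t1; congr C; congr pair => /=; ring.
Qed.

Lemma convex2_fst_between x p q :
  C p -> C q -> p.1 <= x -> x <= q.1 -> exists y, C (x, y).
Proof.
move=> Cp Cq px xq; have [e|ne] := eqVneq p.1 q.1.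
  have -> : x = p.1 by apply/eqP; rewrite eq_le px e xq.
  by exists p.2; rewrite -surjective_pairing.
have lt12 : p.1 < q.1 by rewrite lt_neqAle ne (le_trans px xq).
have [t [t0 t1 ->]] := segment_point lt12 px xq.
by eexists; exact: (cvC Cp Cq t0 t1).
Qed.

Lemma convex2_section_itv x y0 : C (x, y0) ->
  exists a b, a <= b /\ [set y | C (x, y)] = `[a, b]%classic.
Proof.
move=> Cx; apply: closed_bounded_convexR_itv.
- by exists y0.
- apply: (preimage_closed (f := fun y => (x, y))); first by move=> y _; exact: pairl_continuous.
  by apply: compact_closed => //; exact: norm_hausdorff.
- by have [M HM] := compact_in_square cC; exists M => y /HM[].
- by move=> y1 y2 y C1 C2; exact: convex2_vsegment.
Qed.

Lemma convex2_fst_itv : C !=set0 -> exists a b, a <= b /\ fst @` C = `[a, b]%classic.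
Proof.
move=> [p Cp]; apply: closed_bounded_convexR_itv.
- by exists p.1, p.
- by apply: compact_closed (compact_fst cC); exact: Rhausdorff.
- exact: compact_normR_bounded (compact_fst cC).
- move=> y1 y2 y [p1 C1 <-] [p2 C2 <-] h1 h2.
  by have [z Cz] := convex2_fst_between C1 C2 h1 h2; exists (y, z).
Qed.

End ConvexSections.

Section Minkowski.
Variables (R : realType) (A B : set (R * R)).

Lemma mink_sum_compact : compact A -> compact B -> compact (mink_sum A B).
Proof.
move=> cA cB.
have -> : mink_sum A B =
    (fun z : (R * R) * (R * R) => (z.1.1 + z.2.1, z.1.2 + z.2.2)) @` (A `*` B).
  apply/seteqP; split => [z [a [b [Aa [Bb ->]]]]|_ [[a b] [Aa Bb] <-]].
    by exists (a, b).
  by exists a, b.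
apply: continuous_compact; last exact: compact_setX.
by apply: continuous_subspaceT; exact: add_continuous.
Qed.

Lemma mink_sum_convex2 : convex2 A -> convex2 B -> convex2 (mink_sum A B).
Proof.
move=> cA cB p q t [a [b [Aa [Bb ->]]]] [a' [b' [Aa' [Bb' ->]]]] t0 t1.
exists ((1 - t) * a.1 + t * a'.1, (1 - t) * a.2 + t * a'.2).
exists ((1 - t) * b.1 + t * b'.1, (1 - t) * b.2 + t * b'.2).
do 2 (split; first by [apply: cA | apply: cB]).
by congr pair => /=; ring.
Qed.

Lemma fst_mink_sum a1 b1 a2 b2 :
  fst @` A = `[a1, b1]%classic -> fst @` B = `[a2, b2]%classic -> a1 <= b1 -> a2 <= b2 ->
  fst @` mink_sum A B = `[a1 + a2, b1 + b2]%classic.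
Proof.
move=> eA eB ab1 ab2; apply/seteqP; split.
  move=> _ [_ [a [b [Aa [Bb ->]]]] <-] /=.
  have : (fst @` A) a.1 by exists a.
  have : (fst @` B) b.1 by exists b.
  by rewrite eA eB /= !in_itv /= => /andP[? ?] /andP[? ?]; apply/andP; split; lra.
move=> x; rewrite /= in_itv /= => /andP[lx xu].
pose x1 := Num.max a1 (x - b2).
have x1_ge : a1 <= x1 /\ x - b2 <= x1 by rewrite /x1 !le_max !lexx orbT.
have x1_le : x1 <= b1 /\ x1 <= x - a2.
  by rewrite /x1 !ge_max; split; apply/andP; split; lra.
have [a Aa ea] : (fst @` A) x1 by rewrite eA /= in_itv /=; apply/andP; lra.
have [b Bb eb] : (fst @` B) (x - x1) by rewrite eB /= in_itv /=; apply/andP; lra.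
exists (a.1 + b.1, a.2 + b.2); last by rewrite /= ea eb; ring.
by exists a, b.
Qed.

Lemma vstretch_mink_sum h : convex2 A -> convex2 B -> 0 <= h ->
  mink_sum (vstretch A h) B = vstretch (mink_sum A B) h.
Proof.
move=> cA cB h0; apply/seteqP; split.
  move=> _ [a [b [[y1 [y2 [A1 [A2 [l1 l2]]]]] [Bb ->]]]] /=.
  exists (y1 + b.2), (y2 + b.2); split; [|split; [|split]] => /=.
  - by exists (a.1, y1), b.
  - by exists (a.1, y2), b.
  - by lra.
  - by lra.
move=> [x y] [y1 [y2 [S1 [S2 /= [l1 l2]]]]].
have [le|lt] := leP y y2.
  have [a [b [Aa [Bb e]]]] := convex2_vsegment (mink_sum_convex2 cA cB) S1 S2 l1 le.
  by exists a, b; split => //; exists a.2, a.2; rewrite -surjective_pairing lerDl.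
(* Above the fibre of A + B, lift the summand a of (x, y2) inside vstretch A h. *)
case: S2 => a [b [Aa [Bb [e1 e2]]]].
exists (a.1, a.2 + (y - y2)), b; split; last first.
  by split => //; rewrite /= -e1 e2; congr pair; ring.
by exists a.2, a.2 => /=; rewrite -surjective_pairing; split => //; split => //; lra.
Qed.

End Minkowski.

Section Measure.
Variable R : realType.
Local Notation mu := (@lebesgue_measure R).
Local Notation mu2 := ((@lebesgue_measure R \x @lebesgue_measure R)%E).

Lemma lebesgue_measure_itvcc (a b : R) : a <= b ->
  mu (`[a, b]%classic : set (measurableTypeR R)) = (b - a)%:E.
Proof.
move=> ab; rewrite lebesgue_measure_itv /= lte_fin.
case: ltP => [_|ba]; first by rewrite -EFinD.
have -> : a = b by apply/eqP; rewrite eq_le ab ba.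
by rewrite subrr.
Qed.

Lemma compact_measureR2_finite (C : set (R * R)) : compact C -> mu2 C \is a fin_num.
Proof.
move=> cC; have [M HM] := compact_in_square cC.
have [M0|M0] := leP 0 M; last first.
  rewrite [C](_ : _ = set0) ?measure0 //; apply/seteqP; split => // p /HM[+ _].
  by have := normr_ge0 p.1; lra.
pose sq := (`[- M, M]%classic `*` `[- M, M]%classic : set (R * R)).
have Csq : C `<=` sq by move=> p /HM[? ?]; split; rewrite /= in_itv /= -ler_norml.
have mI : measurable (`[- M, M]%classic : set (measurableTypeR R)) by exact: measurable_itv.
have mC := compact_measurableR2 cC.
have msq : measurable (sq : set (measurableTypeR R * measurableTypeR R)).
  exact: measurableX.
rewrite ge0_fin_numE ?measure_ge0 //.
apply: (@le_lt_trans _ _ (mu2 sq)).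
  by apply: (@le_measure _ _ _ mu2); rewrite ?inE.
rewrite product_measure1E //.
have fin : (mu (`[(- M)%R, M]%classic : set (measurableTypeR R)) < +oo)%E.
  by rewrite lebesgue_measure_itvcc ?ltry //; lra.
by apply: lte_mul_pinfty => //; rewrite ge0_fin_numE.
Qed.

(* Over pi(C) the fibre [u, v] of C becomes [u, v + h]. *)
Lemma lebesgue_xsection_vstretch (C : set (R * R)) h x :
  compact C -> convex2 C -> 0 <= h ->
  mu (xsection (vstretch C h) x) = (mu (xsection C x) + (h * \1_(fst @` C) x)%:E)%E.
Proof.
move=> cC cv h0; rewrite !xsectionE indicE.
have [[p Cp px]|nI] := pselect ((fst @` C) x); last first.
  rewrite memNset // mulr0 adde0.
  have -> : (fun y => (x, y)) @^-1` vstretch C h = set0.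
    by apply/seteqP; split => // y [y1 [_ [C1 _]]]; apply: nI; exists (x, y1).
  have -> : (fun y => (x, y)) @^-1` C = set0.
    by apply/seteqP; split => // y Cy; apply: nI; exists (x, y).
  by [].
rewrite mem_set; last by exists p.
have Cx : C (x, p.2) by rewrite -px -surjective_pairing.
have [a [b [ab eS]]] := convex2_section_itv cC cv Cx.
have Cab y : C (x, y) <-> a <= y <= b.
  by rewrite -[C (x, y)]/([set y | C (x, y)] y) eS /= in_itv.
have -> : (fun y => (x, y)) @^-1` vstretch C h = `[a, b + h]%classic.
  apply/seteqP; split => y.
    move=> [y1 [y2 [/Cab/andP[? ?] [/Cab/andP[? ?] /= [? ?]]]]].
    by rewrite /= in_itv /=; apply/andP; split; lra.
  rewrite /= in_itv /= => /andP[? ?]; exists a, b.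
  by split; [|split]; [apply/Cab; rewrite lexx ab..|].
have -> : (fun y => (x, y)) @^-1` C = `[a, b]%classic by exact: eS.
rewrite !lebesgue_measure_itvcc //; last by lra.
by rewrite mulr1 -EFinD; congr EFin; ring.
Qed.

Lemma area_vstretch (C : set (R * R)) h : compact C -> convex2 C ->
  C !=set0 -> 0 <= h -> area (vstretch C h) = area C + h * projlen C.
Proof.
move=> cC cv C0 h0; have [a [b [ab eI]]] := convex2_fst_itv cC cv C0.
have mI : measurable (fst @` C : set (measurableTypeR R)).
  by rewrite eI; exact: measurable_itv.
rewrite /area /projlen.
(* Cavalieri: the product measure integrates the lengths of the vertical fibres. *)
have -> : mu2 (vstretch C h) = (mu2 C + h%:E * mu (fst @` C))%E.
  rewrite /product_measure1 /=.
  under eq_integral => x _ do rewrite (lebesgue_xsection_vstretch x cC cv h0).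
  rewrite ge0_integralD //.
  - rewrite integralZl_indic //; last by move=> /lt_le_trans/(_ h0); rewrite ltxx.
    by rewrite integral_indic // setIT.
  - by apply: measurable_fun_xsection; exact: compact_measurableR2.
  - by move=> x _; rewrite lee_fin mulr_ge0.
  - by apply/measurable_EFinP; apply: measurable_funM.
rewrite eI lebesgue_measure_itvcc //.
by move: (compact_measureR2_finite cC); case: (mu2 C).
Qed.

Lemma projlen_mink_sum (A B : set (R * R)) :
  compact A -> convex2 A -> A !=set0 -> compact B -> convex2 B -> B !=set0 ->
  projlen (mink_sum A B) = projlen A + projlen B.
Proof.
move=> cA cvA A0 cB cvB B0.
have [a1 [b1 [ab1 e1]]] := convex2_fst_itv cA cvA A0.
have [a2 [b2 [ab2 e2]]] := convex2_fst_itv cB cvB B0.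
rewrite /projlen (fst_mink_sum e1 e2 ab1 ab2) e1 e2.
rewrite !lebesgue_measure_itvcc ?lerD //=.
by rewrite opprD; ring.
Qed.

Lemma convex_body_nonempty (A : set (R * R)) : convex_body A -> A !=set0.
Proof. by move=> [_ [_ [p /interior_subset Ap]]]; exists p. Qed.

Lemma convex_body_projlen_gt0 (A : set (R * R)) : convex_body A -> 0 < projlen A.
Proof.
move=> [cA [cvA [p pA]]].
have [a [b [ab eI]]] := convex2_fst_itv cA cvA (ex_intro _ p (interior_subset pA)).
move: pA => /nbhs_ballP[e /= e0 peA].
have inI d : `|d| < e -> a <= p.1 + d <= b.
  move=> de; have : (fst @` A) (p.1 + d).
    exists (p.1 + d, p.2) => //; apply: peA; split; rewrite /ball /= ?subrr ?normr0 //.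
    by rewrite opprD addrA subrr add0r normrN.
  by rewrite eI /= in_itv.
have /andP[? ?] := inI (e / 2) ltac:(rewrite ger0_norm; lra).
have /andP[? ?] := inI (- (e / 2)) ltac:(rewrite normrN ger0_norm; lra).
rewrite /projlen eI lebesgue_measure_itvcc //=; lra.
Qed.

End Measure.

Theorem lemma4p1 (R : realType) (A B : set (R * R)) (h : R) :
  convex_body A -> convex_body B -> 0 <= h ->
  let A' := vstretch A h in
  let m := projlen A in
  let n := projlen B in
  area (mink_sum A B) = (area A / m + area B / n) * (m + n) <->
  area (mink_sum A' B) = (area A' / m + area B / n) * (m + n).
Proof.
move=> bA bB h0 A' m n.
have m0 : 0 < m by exact: convex_body_projlen_gt0.
have n0 : 0 < n by exact: convex_body_projlen_gt0.
have A0 := convex_body_nonempty bA; have B0 := convex_body_nonempty bB.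
move: bA bB => [cA [cvA _]] [cB [cvB _]].
have AB0 : mink_sum A B !=set0.
  by case: A0 B0 => a Aa [b Bb]; exists (a.1 + b.1, a.2 + b.2), a, b.
have eA' : area A' = area A + h * m by exact: area_vstretch.
have eAB' : area (mink_sum A' B) = area (mink_sum A B) + h * (m + n).
  rewrite /A' vstretch_mink_sum // area_vstretch ?projlen_mink_sum //.
  - exact: mink_sum_compact.
  - exact: mink_sum_convex2.
rewrite eA' eAB'.
have -> : ((area A + h * m) / m + area B / n) * (m + n) =
    (area A / m + area B / n) * (m + n) + h * (m + n).
  by field; rewrite !gt_eqF // addr_gt0.
by split => [-> //|]; exact: addIr.
Qed.
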